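(* Let $M\subset\mathbb{R}^2$ be a smooth regular closed curve, and let $a,b\in M$ be a standard pair of points. Assume $\kappa_M(a)+\kappa_M(b)\neq 0$ and that $$q=\frac{\kappa_M(a)\, a+\kappa_M(b)\, b}{\kappa_M(a)+\kappa_M(b)}$$ is a regular point of $\mathrm{CSS}(M)$. Then the curvature of $\mathrm{CSS}(M)$ at $q$ equals $$\kappa_{\mathrm{CSS}(M)}(q)=\operatorname{sgn}(\kappa_M(b))\cdot\frac{\big(\kappa_M(a)+\kappa_M(b)\big)^3}{\left|\kappa_M^2(b)\kappa_M'(a)-\kappa_M^2(a)\kappa_M'(b)\right|}\cdot\frac{\det\big(a-b,\mathbbm{t}(a)\big)}{|a-b|^3},$$ where $\mathbbm{t}(a)$ is the unit tangent vector to $M$ at $a$ compatible with the orientation of $M$, and $'$ denotes the derivative with respect to arc length.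
   Context: Two distinct points $a,b\in M$ form a parallel pair if the tangent lines to $M$ at $a$ and $b$ are parallel; the line through $a$ and $b$ is then called an affine chord. The Centre Symmetry Set $\mathrm{CSS}(M)$ is the envelope of all affine chords of $M$. For a regular parameterization $f$ of $M$, $M$ is parameterized at opposite directions at $f(s_1),f(s_2)$ if $f'(s_1)=\alpha f'(s_2)$ with $\alpha<0$. A pair $a,b\in M$ is standard if it is a parallel pair, $M$ is parameterized at opposite directions at $a$ and $b$, and $\kappa_M(b)\neq 0$, where $\kappa_M$ is the signed curvature. For a standard pair, let $f(s)$, $g(t)$ be local arc-length parameterizations of $M$ near $a$ and $b$; there is a smooth function $t(s)$ with $f'(s)=-g'(t(s))$ (and $t'(s)=\kappa_f(s)/\kappa_g(t(s))$). Away from double tangents, $\mathrm{CSS}(M)$ is locally parameterized (natural parameterization) by $\gamma(s)=\dfrac{\kappa_f(s)f(s)+\kappa_g(t(s))g(t(s))}{\kappa_f(s)+\kappa_g(t(s))}$ wherever the denominator is nonzero; regular/singular points and curvature of $\mathrm{CSS}(M)$ refer to this parameterization. *)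

From Stdlib Require Import Reals.
From Coquelicot Require Import Coquelicot.
Open Scope R_scope.

Definition smooth (u : R -> R) : Prop :=
  forall (n : nat) (s : R), ex_derive (Derive_n u n) s.

Definition smooth_at (u : R -> R) (s : R) : Prop :=
  forall n : nat, ex_derive (Derive_n u n) s.

Definition sgn (r : R) : R :=
  if Rlt_dec 0 r then 1 else if Rlt_dec r 0 then -1 else 0.

Definition arclength_closed_curve (x y : R -> R) : Prop :=
  smooth x /\ smooth y /\
  (exists L, 0 < L /\ forall s, x (s + L) = x s /\ y (s + L) = y s) /\
  (forall s, (Derive x s) ^ 2 + (Derive y s) ^ 2 = 1).

Definition curv (x y : R -> R) (s : R) : R :=
  Derive x s * Derive (Derive y) s - Derive y s * Derive (Derive x) s.

(* natural parameterization of CSS(M) near a standard pair: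
   gamma(s) = (k(s) f(s) + k(t(s)) f(t(s))) / (k(s) + k(t(s))) *)
Definition css_x (x y t : R -> R) (s : R) : R :=
  (curv x y s * x s + curv x y (t s) * x (t s)) / (curv x y s + curv x y (t s)).
Definition css_y (x y t : R -> R) (s : R) : R :=
  (curv x y s * y s + curv x y (t s) * y (t s)) / (curv x y s + curv x y (t s)).

Definition plane_curvature (u v : R -> R) (s : R) : R :=
  (Derive u s * Derive (Derive v) s - Derive v s * Derive (Derive u) s)
  / (sqrt ((Derive u s) ^ 2 + (Derive v s) ^ 2)) ^ 3.

(* Along the standard pair the reparameterization t satisfies t' = k(s) / k(t(s)), and
   differentiating the natural parameterization gives gamma' = H (f - f o t) for a scalar H
   built from k, k' and t'.  Hence gamma'' = H' (f - f o t) + H (1 + t') f', the H' term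
   drops out of det(gamma', gamma''), and the curvature of CSS(M) is
   (1 + t') / |H| * det(a - b, t(a)) / |a - b|^3.  Substituting t' = k(a) / k(b) turns
   (1 + t') / |H| into the stated factor, the sign of k(b) coming from |k(b)| / k(b). *)

From Stdlib Require Import Reals Lra.
From Coquelicot Require Import Coquelicot.
Open Scope R_scope.

(* auto_derive leaves eta-expanded functions behind, which ring would treat as new atoms. *)
Ltac eta_reduce :=
  repeat match goal with |- context [fun r => ?f r] => change (fun r => f r) with f end.

Lemma locally_of_Rabs_ball (P : R -> Prop) (s0 : R) :
  (exists eps, 0 < eps /\ forall s, Rabs (s - s0) < eps -> P s) -> locally s0 P.
Proof.
  intros [eps [Heps HP]].
  exists (mkposreal eps Heps).
  exact HP.
Qed.

Lemma smooth_ex_derive (u : R -> R) (s : R) : smooth u -> ex_derive u s.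
Proof. intros Su. exact (Su 0%nat s). Qed.

Lemma smooth_Derive (u : R -> R) : smooth u -> smooth (Derive u).
Proof.
  intros Su n s.
  apply ex_derive_ext with (Derive_n u (n + 1)).
  - intros r. symmetry. exact (Derive_n_comp u n 1 r).
  - apply Su.
Qed.

Lemma sgn_eq_Rabs_div (r : R) : r <> 0 -> sgn r = Rabs r / r.
Proof.
  intros Hr. unfold sgn.
  destruct (Rlt_dec 0 r); [rewrite Rabs_pos_eq by lra; field; exact Hr|].
  destruct (Rlt_dec r 0); [rewrite Rabs_left by lra; field; exact Hr | lra].
Qed.

Lemma Derive2_antiparallel (u t : R -> R) (s : R) :
  locally s (fun r => Derive u r = - Derive u (t r)) ->
  ex_derive t s -> ex_derive (Derive u) (t s) ->
  Derive (Derive u) s = - (Derive t s * Derive (Derive u) (t s)).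
Proof.
  intros Hanti Ht Hu.
  apply is_derive_unique.
  apply is_derive_ext_loc with (fun r => - Derive u (t r)).
  - apply filter_imp with (2 := Hanti). intros r Hr. now symmetry.
  - auto_derive; [tauto | eta_reduce; ring].
Qed.

Lemma curv_antiparallel (x y t : R -> R) (s : R) :
  smooth x -> smooth y -> ex_derive t s ->
  locally s (fun r => Derive x r = - Derive x (t r)) ->
  locally s (fun r => Derive y r = - Derive y (t r)) ->
  curv x y s = Derive t s * curv x y (t s).
Proof.
  intros Sx Sy Ht Hx Hy.
  unfold curv.
  rewrite (Derive2_antiparallel x t s), (Derive2_antiparallel y t s); auto
    using smooth_ex_derive, smooth_Derive.
  rewrite (locally_singleton _ _ Hx), (locally_singleton _ _ Hy).
  ring.
Qed.

Section Curvature.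

Variables x y : R -> R.
Hypotheses (Sx : smooth x) (Sy : smooth y).

Lemma is_derive_curv (s : R) :
  is_derive (curv x y) s
    (Derive x s * Derive (Derive (Derive y)) s - Derive y s * Derive (Derive (Derive x)) s).
Proof.
  unfold curv.
  auto_derive; [repeat split; auto using smooth_ex_derive, smooth_Derive | eta_reduce; ring].
Qed.

Lemma ex_derive_curv (s : R) : ex_derive (curv x y) s.
Proof. eexists. apply is_derive_curv. Qed.

Lemma ex_derive_Derive_curv (s : R) : ex_derive (Derive (curv x y)) s.
Proof.
  apply ex_derive_ext with (fun r => Derive x r * Derive (Derive (Derive y)) r
                                    - Derive y r * Derive (Derive (Derive x)) r).
  - intros r. symmetry. apply is_derive_unique, is_derive_curv.
  - auto_derive. repeat split; auto using smooth_ex_derive, smooth_Derive.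
Qed.

End Curvature.

(* css_x x y t is weighted_chord_point (curv x y) x t, and css_y x y t likewise with y. *)
Definition weighted_chord_point (K u t : R -> R) (s : R) : R :=
  (K s * u s + K (t s) * u (t s)) / (K s + K (t s)).

Definition chord_speed (K t : R -> R) (s : R) : R :=
  (Derive K s * K (t s) - Derive K (t s) * Derive t s * K s) / (K s + K (t s)) ^ 2.

Lemma is_derive_weighted_chord_point (K u t : R -> R) (s : R) :
  ex_derive K s -> ex_derive K (t s) -> ex_derive u s -> ex_derive u (t s) ->
  ex_derive t s ->
  Derive u s = - Derive u (t s) -> K s = Derive t s * K (t s) ->
  K s + K (t s) <> 0 ->
  is_derive (weighted_chord_point K u t) s (chord_speed K t s * (u s - u (t s))).
Proof.
  intros HK HKt Hu Hut Ht Eu EK Hsum.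
  unfold weighted_chord_point, chord_speed.
  auto_derive; [repeat split; auto|].
  eta_reduce.
  rewrite Eu. rewrite EK at 1. rewrite EK in Hsum |- *.
  field. exact Hsum.
Qed.

Lemma pair_neq0_sum_sq_pos (a b : R) : (a, b) <> (0, 0) -> 0 < a ^ 2 + b ^ 2.
Proof.
  intros Hab.
  destruct (Req_dec a 0) as [Ea|Ea]; [destruct (Req_dec b 0) as [Eb|Eb]|].
  - exfalso. apply Hab. now rewrite Ea, Eb.
  - pose proof (pow2_ge_0 a). pose proof (pow_lt _ 2 (Rabs_pos_lt _ Eb)).
    rewrite pow2_abs in *. lra.
  - pose proof (pow2_ge_0 b). pose proof (pow_lt _ 2 (Rabs_pos_lt _ Ea)).
    rewrite pow2_abs in *. lra.
Qed.

Lemma Derive_Derive_scaled (u h p : R -> R) (s : R) :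
  locally s (fun r => Derive u r = h r * p r) -> ex_derive h s -> ex_derive p s ->
  Derive (Derive u) s = Derive h s * p s + h s * Derive p s.
Proof.
  intros Hu Hh Hp.
  apply is_derive_unique.
  apply is_derive_ext_loc with (fun r => h r * p r).
  - apply filter_imp with (2 := Hu). intros r Hr. now symmetry.
  - auto_derive; [tauto | eta_reduce; ring].
Qed.

(* The h' term of the acceleration is parallel to the velocity and drops out of the determinant. *)
Lemma plane_curvature_scaled_velocity (u v h p q : R -> R) (s : R) :
  locally s (fun r => Derive u r = h r * p r) ->
  locally s (fun r => Derive v r = h r * q r) ->
  ex_derive h s -> ex_derive p s -> ex_derive q s ->
  h s <> 0 -> (p s, q s) <> (0, 0) ->
  plane_curvature u v s
  = (p s * Derive q s - q s * Derive p s) / (Rabs (h s) * sqrt (p s ^ 2 + q s ^ 2) ^ 3).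
Proof.
  intros Hu Hv Hh Hp Hq Hh0 Hpq.
  assert (Hnorm := pair_neq0_sum_sq_pos _ _ Hpq).
  assert (Hsqrt : 0 < sqrt (p s ^ 2 + q s ^ 2)) by now apply sqrt_lt_R0.
  assert (Habs : 0 < Rabs (h s)) by now apply Rabs_pos_lt.
  unfold plane_curvature.
  rewrite (Derive_Derive_scaled u h p), (Derive_Derive_scaled v h q) by assumption.
  rewrite (locally_singleton _ _ Hu), (locally_singleton _ _ Hv).
  replace ((h s * p s) ^ 2 + (h s * q s) ^ 2) with (Rabs (h s) ^ 2 * (p s ^ 2 + q s ^ 2))
    by (rewrite pow2_abs; ring).
  rewrite sqrt_mult_alt, sqrt_pow2 by (auto using pow2_ge_0, Rabs_pos).
  replace (h s * p s * (Derive h s * q s + h s * Derive q s)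
           - h s * q s * (Derive h s * p s + h s * Derive p s))
    with (Rabs (h s) ^ 2 * (p s * Derive q s - q s * Derive p s))
    by (rewrite pow2_abs; ring).
  field. lra.
Qed.

(* With k(a) = t' k(b), the numerator of chord_speed is (k(b)^2 k'(a) - k(a)^2 k'(b)) / k(b). *)
Lemma antiparallel_curvature_factor (k1 k2 dk1 dk2 tau : R) :
  k2 <> 0 -> k1 = tau * k2 -> k1 + k2 <> 0 ->
  (1 + tau) / Rabs ((dk1 * k2 - dk2 * tau * k1) / (k1 + k2) ^ 2)
  = sgn k2 * ((k1 + k2) ^ 3 / Rabs (k2 ^ 2 * dk1 - k1 ^ 2 * dk2)).
Proof.
  intros Hk2 Hk1 Hsum.
  set (N := dk1 * k2 - dk2 * tau * k1).
  replace (k2 ^ 2 * dk1 - k1 ^ 2 * dk2) with (k2 * N) by (unfold N; rewrite Hk1; ring).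
  assert (Hsq : 0 < (k1 + k2) ^ 2).
  { rewrite <- pow2_abs. apply pow_lt, Rabs_pos_lt, Hsum. }
  rewrite Rabs_div, Rabs_mult, (Rabs_pos_eq ((k1 + k2) ^ 2)) by lra.
  assert (Habs : Rabs k2 <> 0) by now apply Rabs_no_R0.
  rewrite (sgn_eq_Rabs_div k2 Hk2).
  replace tau with (k1 / k2) by (rewrite Hk1; field; exact Hk2).
  destruct (Req_dec (Rabs N) 0) as [E|E].
  - (* both sides are junk values x / 0 = 0 *)
    rewrite E. unfold Rdiv. rewrite Rmult_0_r, Rmult_0_l, !Rinv_0. ring.
  - field. repeat split; auto; lra.
Qed.

Section CentreSymmetrySet.

Variables (x y t : R -> R) (s0 : R).
Hypotheses (Sx : smooth x) (Sy : smooth y).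
Hypothesis antiparallel : locally s0 (fun s =>
  smooth_at t s /\ Derive x s = - Derive x (t s) /\ Derive y s = - Derive y (t s)).
Hypothesis curv_sum_neq0 : curv x y s0 + curv x y (t s0) <> 0.

Lemma ex_derive_t_near : locally s0 (fun s => ex_derive t s).
Proof. apply filter_imp with (2 := antiparallel). intros s Hs. exact (proj1 Hs 0%nat). Qed.

Lemma antiparallel_x_near : locally s0 (fun s => Derive x s = - Derive x (t s)).
Proof. apply filter_imp with (2 := antiparallel). tauto. Qed.

Lemma antiparallel_y_near : locally s0 (fun s => Derive y s = - Derive y (t s)).
Proof. apply filter_imp with (2 := antiparallel). tauto. Qed.

Lemma curv_antiparallel_near : locally s0 (fun s => curv x y s = Derive t s * curv x y (t s)).
Proof.
  apply filter_imp with (2 := filter_and _ _ (locally_locally _ _ antiparallel_x_near)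
    (filter_and _ _ (locally_locally _ _ antiparallel_y_near) ex_derive_t_near)).
  intros s [Hx [Hy Ht]].
  now apply curv_antiparallel.
Qed.

Lemma curv_sum_neq0_near : locally s0 (fun s => curv x y s + curv x y (t s) <> 0).
Proof.
  assert (Hcont : continuous (fun s => curv x y s + curv x y (t s)) s0).
  { apply (ex_derive_continuous (K := R_AbsRing) (V := R_NormedModule)). auto_derive.
    repeat split; auto using ex_derive_curv.
    exact (locally_singleton _ _ ex_derive_t_near). }
  exact (Hcont _ (open_neq 0 _ curv_sum_neq0)).
Qed.

Lemma Derive_weighted_chord_point_near (u : R -> R) :
  smooth u -> locally s0 (fun s => Derive u s = - Derive u (t s)) ->
  locally s0 (fun s => Derive (weighted_chord_point (curv x y) u t) s
                       = chord_speed (curv x y) t s * (u s - u (t s))).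
Proof.
  intros Su Hu.
  apply filter_imp with (2 := filter_and _ _ Hu
    (filter_and _ _ curv_antiparallel_near (filter_and _ _ curv_sum_neq0_near ex_derive_t_near))).
  intros s [Eu [EK [Hsum Ht]]].
  apply is_derive_unique, is_derive_weighted_chord_point;
    auto using smooth_ex_derive, ex_derive_curv.
Qed.

Lemma ex_derive_chord_speed : ex_derive (chord_speed (curv x y) t) s0.
Proof.
  destruct (locally_singleton _ _ antiparallel) as [St _].
  assert (Ht : ex_derive t s0) by exact (St 0%nat).
  assert (Ht' : ex_derive (Derive t) s0) by exact (St 1%nat).
  unfold chord_speed.
  auto_derive.
  repeat split; auto using ex_derive_curv, ex_derive_Derive_curv.
Qed.

Lemma plane_curvature_css :
  (Derive (css_x x y t) s0, Derive (css_y x y t) s0) <> (0, 0) ->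
  plane_curvature (css_x x y t) (css_y x y t) s0
  = (1 + Derive t s0) / Rabs (chord_speed (curv x y) t s0)
    * (((x s0 - x (t s0)) * Derive y s0 - (y s0 - y (t s0)) * Derive x s0)
       / sqrt ((x s0 - x (t s0)) ^ 2 + (y s0 - y (t s0)) ^ 2) ^ 3).
Proof.
  intros Hreg.
  change (css_x x y t) with (weighted_chord_point (curv x y) x t) in Hreg |- *.
  change (css_y x y t) with (weighted_chord_point (curv x y) y t) in Hreg |- *.
  assert (Hu := Derive_weighted_chord_point_near x Sx antiparallel_x_near).
  assert (Hv := Derive_weighted_chord_point_near y Sy antiparallel_y_near).
  assert (Ht := locally_singleton _ _ ex_derive_t_near).
  assert (Hp : is_derive (fun s : R => x s - x (t s)) s0 ((1 + Derive t s0) * Derive x s0)).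
  { auto_derive; [auto using smooth_ex_derive|].
    eta_reduce.
    rewrite (locally_singleton _ _ antiparallel_x_near). ring. }
  assert (Hq : is_derive (fun s : R => y s - y (t s)) s0 ((1 + Derive t s0) * Derive y s0)).
  { auto_derive; [auto using smooth_ex_derive|].
    eta_reduce.
    rewrite (locally_singleton _ _ antiparallel_y_near). ring. }
  rewrite (locally_singleton _ _ Hu), (locally_singleton _ _ Hv) in Hreg.
  assert (Hh : chord_speed (curv x y) t s0 <> 0).
  { intros E. apply Hreg. rewrite E. f_equal; ring. }
  assert (Hd : (x s0 - x (t s0), y s0 - y (t s0)) <> (0, 0)).
  { intros E. apply Hreg. injection E as Ex Ey. rewrite Ex, Ey. f_equal; ring. }
  assert (Hsqrt : 0 < sqrt ((x s0 - x (t s0)) ^ 2 + (y s0 - y (t s0)) ^ 2)).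
  { apply sqrt_lt_R0, pair_neq0_sum_sq_pos, Hd. }
  rewrite (plane_curvature_scaled_velocity _ _ _ (fun s => x s - x (t s)) (fun s => y s - y (t s))
             s0 Hu Hv ex_derive_chord_speed
             (ex_intro _ _ Hp) (ex_intro _ _ Hq) Hh Hd).
  rewrite (is_derive_unique _ _ _ Hp), (is_derive_unique _ _ _ Hq).
  field. split; [lra | now apply Rabs_no_R0].
Qed.

End CentreSymmetrySet.

Theorem proposition2p11 (x y : R -> R) (s0 t0 : R) :
  arclength_closed_curve x y ->
  (* a = f(s0), b = f(t0) are distinct points *)
  (x s0, y s0) <> (x t0, y t0) ->
  (* parallel pair, parameterized at opposite directions *)
  (exists alpha, alpha < 0 /\
     Derive x s0 = alpha * Derive x t0 /\ Derive y s0 = alpha * Derive y t0) ->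
  (* kappa_M(b) <> 0 *)
  curv x y t0 <> 0 ->
  (* kappa_M(a) + kappa_M(b) <> 0 *)
  curv x y s0 + curv x y t0 <> 0 ->
  forall t : R -> R,
    t s0 = t0 ->
    (exists eps, 0 < eps /\ forall s, Rabs (s - s0) < eps ->
       smooth_at t s /\
       Derive x s = - Derive x (t s) /\ Derive y s = - Derive y (t s)) ->
    (* q = gamma(s0) is a regular point of CSS(M) *)
    (Derive (css_x x y t) s0, Derive (css_y x y t) s0) <> (0, 0) ->
    plane_curvature (css_x x y t) (css_y x y t) s0 =
      sgn (curv x y t0)
      * ((curv x y s0 + curv x y t0) ^ 3
         / Rabs ((curv x y t0) ^ 2 * Derive (curv x y) s0
                 - (curv x y s0) ^ 2 * Derive (curv x y) t0))
      * (((x s0 - x t0) * Derive y s0 - (y s0 - y t0) * Derive x s0)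
         / (sqrt ((x s0 - x t0) ^ 2 + (y s0 - y t0) ^ 2)) ^ 3).
Proof.
  (* Distinctness of a and b follows from regularity of q, and the parallel-pair
     condition is the instance s = s0 of the local one. *)
  intros [Sx [Sy _]] _ _ Hk2 Hsum t Ht0 Hloc Hreg.
  subst t0.
  apply locally_of_Rabs_ball in Hloc.
  rewrite (plane_curvature_css x y t s0 Sx Sy Hloc Hsum Hreg).
  unfold chord_speed.
  rewrite antiparallel_curvature_factor; auto.
  exact (locally_singleton _ _ (curv_antiparallel_near x y t s0 Sx Sy Hloc)).
Qed.
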